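(* In the protocol IT-HS described in the context, with $f<\frac{n}{3}$ Byzantine parties, if some nonfaulty party sets $key3=v$ and $key3\_val=val$ in view $v$, then there exist $f+1$ nonfaulty parties whose $suggest$ messages in every view $v'>v$ support the pair $(v,val)$.
   Context: Model. $n$ parties with inputs $x_i$; up to $f$ Byzantine (arbitrary behaviour), the rest nonfaulty; authenticated point-to-point channels; partial synchrony: after an unknown time GST every message arrives within known $\Delta$ time and clocks are synchronized, before GST delays are arbitrary but finite. A party does something ''in view $v$'' if its variable $view$ equals $v$ at that time. Support: a $suggest$ message whose $key2$, $key2\_val$, $prev\_key2$ fields are $(k2,v2,pk2)$ supports a pair $(K,V)$ if $K\le pk2$, or $K\le k2$ and $V=v2$. Protocol IT-HS (party $i$). Variables: $lock\gets 0$, $lock\_val\gets x_i$; $key3\gets 0$, $key3\_val\gets x_i$; $key2\gets 0$, $key2\_val\gets x_i$, $prev\_key2\gets -1$; $key1\gets 0$, $key1\_val\gets x_i$, $prev\_key1\gets -1$; $view\gets 0$; $highest\_request[j]\gets 0$, $highest\_abort[j]\gets 0$ for $j\in[n]$. ''Send-upon-join $m$'': for each $j$, send $m$ to $j$ as soon as $highest\_request[j]$ equals the current view. Background: (B1) on $\langle request,v\rangle$ from $j$, $highest\_request[j]\gets\max(highest\_request[j],v)$. (B2) on $\langle done,val\rangle$ from $f+1$ parties with the same $val$: if no $done$ sent yet, send $\langle done,val\rangle$ to all. (B3) on $\langle done,val\rangle$ from $n-f$ parties with the same $val$: decide $val$, terminate. (B4) on $\langle abort,v\rangle$ from $j$ with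 $highest\_abort[j]<v$: $highest\_abort[j]\gets v$; $u\gets$ the $(f+1)$-th largest entry of $highest\_abort$; if $u>highest\_abort[i]$ send $\langle abort,u\rangle$ to all and set $highest\_abort[i]\gets u$; $w\gets$ the $(n-f)$-th largest entry; if $w\ge view$ set $view\gets w+1$. Views: for each value $v$ of $view$, while $view=v$: fresh per-view state; after $11\Delta$ local time send $\langle abort,v\rangle$ to all; ignore other views' messages except $abort$, $done$, $request$; primary $p=(v\bmod n)+1$. View change: send $\langle request,v\rangle$ to all; when $highest\_request[p]=v$ send $\langle suggest,key3,key3\_val,key2,key2\_val,prev\_key2,v\rangle$ to $p$; send-upon-join $\langle proof,key1,key1\_val,prev\_key1,v\rangle$. If $i=p$: upon first $\langle suggest,k3,v3,k2,v2,pk2,v\rangle$ from a party, if $pk2<k2<v$ add $(k2,v2,pk2)$ to $key2\_proofs$; if $k3=0$ add $(k3,v3)$ to $suggestions$; else if $k3<v$ add $(k3,v3)$ as soon as at least $f+1$ triples $(k,w,pk)\in key2\_proofs$ satisfy $k3\le pk$ or ($k3\le k$ and $w=v3$); once $|suggestions|\ge n-f$, send-upon-join $\langle propose,k,w,v\rangle$ for $(k,w)\in suggestions$ with maximal $k$. Message processing: upon first $\langle proof,k1,v1,pk1,v\rangle$ from a party, if $v>k1>pk1$ add $(k1,v1,pk1)$ to $proofs$. Upon first $\langle propose,key,val,v\rangle$ from $p$: if $lock=0$ or $val=lock\_val$, send-upon-join $\langle echo,val,v\rangle$; else if $v>key\ge lock$, then once at least $f+1$ triples $(k,w,pk)\in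 proofs$ satisfy $lock\le pk$ or ($lock\le k$ and $w\ne lock\_val$), send-upon-join $\langle echo,val,v\rangle$. Upon $\langle echo,val,v\rangle$ from $n-f$ parties with the same $val$: send-upon-join $\langle key1,val,v\rangle$; if $key1\_val\ne val$ then $prev\_key1\gets key1$, $key1\_val\gets val$; $key1\gets v$. Upon $\langle key1,val,v\rangle$ from $n-f$ parties (same $val$): send-upon-join $\langle key2,val,v\rangle$; if $key2\_val\ne val$ then $prev\_key2\gets key2$, $key2\_val\gets val$; $key2\gets v$. Upon $\langle key2,val,v\rangle$ from $n-f$ (same $val$): send-upon-join $\langle key3,val,v\rangle$; $key3\gets v$, $key3\_val\gets val$. Upon $\langle key3,val,v\rangle$ from $n-f$ (same $val$): send-upon-join $\langle lock,val,v\rangle$; $lock\gets v$, $lock\_val\gets val$. Upon $\langle lock,val,v\rangle$ from $n-f$ (same $val$): if no $done$ sent yet, send $\langle done,val\rangle$ to all. *)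

From HB Require Import structures.
From mathcomp Require Import all_boot all_order all_algebra.
From Stdlib Require List.
Set Implicit Arguments. Unset Strict Implicit. Unset Printing Implicit Defensive.
Import Order.TTheory GRing.Theory Num.Theory.

Section ITHS.

Variable V : eqType.

(* The five "quorum" message kinds  <echo,val,v>, <key1,val,v>, <key2,val,v>,
   <key3,val,v>, <lock,val,v>, which all have the same shape. *)
Inductive phase := PEcho | PKey1 | PKey2 | PKey3 | PLock.

Definition phase_nat (p : phase) : nat :=
  match p with PEcho => 0 | PKey1 => 1 | PKey2 => 2 | PKey3 => 3 | PLock => 4 end.

Definition next_phase (p : phase) : phase :=
  match p with PEcho => PKey1 | PKey1 => PKey2 | PKey2 => PKey3 | PKey3 => PLock
  | PLock => PLock end.

(* Messages.  Views are natural numbers; key fields are integers (prev_key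
   fields may be -1, and Byzantine parties may send arbitrary integers). *)
Inductive msg :=
| MRequest (v : nat)
| MDone (val : V)
| MAbort (v : nat)
| MSuggest (k3 : int) (v3 : V) (k2 : int) (v2 : V) (pk2 : int) (v : nat)
| MProof (k1 : int) (v1 : V) (pk1 : int) (v : nat)
| MPropose (key : int) (val : V) (v : nat)
| MPhase (ph : phase) (val : V) (v : nat).

Definition supports (k2 : int) (v2 : V) (pk2 : int) (K : int) (W : V) : bool :=
  (K <= pk2)%R || ((K <= k2)%R && (W == v2)).

(* how the first propose of the view was classified upon receipt *)
Inductive pmode := PImm | PCond | PRej.

Variables n f : nat.

Definition party := 'I_n.

Definition is_primary (i : party) (v : nat) : bool := nat_of_ord i == v %% n.
Definition primary (v : nat) : option party := insub (v %% n).

(* fresh per-view state *)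
Record pview := PView {
  pending : seq (msg * {set party});  (* send-upon-join messages, with the
                                          destinations already served *)
  sug_sent : bool;
  timer_fired : bool;                  (* abort (timer) already sent *)
  sug_rcv : party -> option (int * V * int * V * int); (* first suggest per sender *)
  proof_rcv : party -> option (int * V * int);         (* first proof per sender *)
  prop_rcv : option (int * V * pmode);                 (* first propose from p *)
  echo_queued : bool;
  prop_queued : bool;
  from : phase -> party -> V -> bool;  (* quorum messages received *)
  fired : phase -> V -> bool           (* quorum rule already triggered *)
}.

Definition pv0 : pview :=
  PView [::] false false (fun _ => None) (fun _ => None) None false false
        (fun _ _ _ => false) (fun _ _ => false).

Record lstate := LState {
  lock : int; lock_val : V;
  key3 : int; key3_val : V;
  key2 : int; key2_val : V; prev_key2 : int;
  key1 : int; key1_val : V; prev_key1 : int;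
  view : nat;
  hreq : party -> nat;
  habort : party -> nat;
  done_from : party -> V -> bool;
  done_sent : bool;
  decided : option V;              (* Some val once decided (terminated) *)
  pv : pview
}.

Record gstate := GState {
  loc : party -> lstate;
  (* every message ever sent by a nonfaulty party: (sender, receiver, msg) *)
  net : seq (party * party * msg)
}.

Definition set_pv (st : lstate) (p : pview) : lstate :=
  LState (lock st) (lock_val st) (key3 st) (key3_val st) (key2 st) (key2_val st)
    (prev_key2 st) (key1 st) (key1_val st) (prev_key1 st) (view st) (hreq st)
    (habort st) (done_from st) (done_sent st) (decided st) p.

Definition set_hreq (st : lstate) (h : party -> nat) : lstate :=
  LState (lock st) (lock_val st) (key3 st) (key3_val st) (key2 st) (key2_val st)
    (prev_key2 st) (key1 st) (key1_val st) (prev_key1 st) (view st) h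
    (habort st) (done_from st) (done_sent st) (decided st) (pv st).

Definition set_habort (st : lstate) (h : party -> nat) : lstate :=
  LState (lock st) (lock_val st) (key3 st) (key3_val st) (key2 st) (key2_val st)
    (prev_key2 st) (key1 st) (key1_val st) (prev_key1 st) (view st) (hreq st)
    h (done_from st) (done_sent st) (decided st) (pv st).

Definition set_done (st : lstate) (df : party -> V -> bool) (ds : bool)
    (dec : option V) : lstate :=
  LState (lock st) (lock_val st) (key3 st) (key3_val st) (key2 st) (key2_val st)
    (prev_key2 st) (key1 st) (key1_val st) (prev_key1 st) (view st) (hreq st)
    (habort st) df ds dec (pv st).

Definition pv_set_pending (p : pview) (q : seq (msg * {set party})) : pview :=
  PView q (sug_sent p) (timer_fired p) (sug_rcv p) (proof_rcv p) (prop_rcv p)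
    (echo_queued p) (prop_queued p) (from p) (fired p).

Definition pv_queue (p : pview) (m : msg) : pview :=
  pv_set_pending p (rcons (pending p) (m, set0)).

Definition pv_set_flags (p : pview) (ss tf eq pq : bool) : pview :=
  PView (pending p) ss tf (sug_rcv p) (proof_rcv p) (prop_rcv p) eq pq
    (from p) (fired p).

Definition pv_set_rcv (p : pview) sr pr prp : pview :=
  PView (pending p) (sug_sent p) (timer_fired p) sr pr prp
    (echo_queued p) (prop_queued p) (from p) (fired p).

Definition pv_set_from (p : pview) fr fi : pview :=
  PView (pending p) (sug_sent p) (timer_fired p) (sug_rcv p) (proof_rcv p)
    (prop_rcv p) (echo_queued p) (prop_queued p) fr fi.

Definition sendall (i : party) (m : msg) : seq (party * party * msg) :=
  [seq (i, j, m) | j <- enum 'I_n].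

Definition enter_view (i : party) (st : lstate) (w : nat)
    : lstate * seq (party * party * msg) :=
  (LState (lock st) (lock_val st) (key3 st) (key3_val st) (key2 st) (key2_val st)
    (prev_key2 st) (key1 st) (key1_val st) (prev_key1 st) w (hreq st)
    (habort st) (done_from st) (done_sent st) (decided st)
    (pv_queue pv0 (MProof (key1 st) (key1_val st) (prev_key1 st) w)),
   sendall i (MRequest w)).

Definition init_local (x : party -> V) (i : party) : lstate :=
  (enter_view i
     (LState (Posz 0) (x i) (Posz 0) (x i) (Posz 0) (x i) (-1)%R (Posz 0) (x i) (-1)%R 0 (fun _ => 0%N)
        (fun _ => 0%N) (fun _ _ => false) false None pv0) 0).1.

Definition init (x : party -> V) (F : {set party}) : gstate :=
  GState (init_local x)
    (flatten [seq sendall i (MRequest 0) | i <- enum 'I_n & i \notin F]).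

(* k-th largest entry (k >= 1) of a vector of naturals *)
Definition kth_largest (h : party -> nat) (k : nat) : nat :=
  nth 0%N (sort geq [seq h j | j <- enum 'I_n]) k.-1.

Definition on_abort (i src : party) (w : nat) (st : lstate)
    : lstate * seq (party * party * msg) :=
  if (habort st src < w)%N then
    let h1 := fun j => if j == src then w else habort st j in
    let u := kth_largest h1 f.+1 in
    let h2 := if (h1 i < u)%N then (fun j => if j == i then u else h1 j) else h1 in
    let out1 := if (h1 i < u)%N then sendall i (MAbort u) else [::] in
    let st1 := set_habort st h2 in
    let w' := kth_largest h2 (n - f) in
    if (view st1 <= w')%N then
      let r := enter_view i st1 w'.+1 in (r.1, out1 ++ r.2)
    else (st1, out1)
  else (st, [::]).

Definition on_msg (i src : party) (m : msg) (st : lstate)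
    : lstate * seq (party * party * msg) :=
  let p := pv st in
  match m with
  | MRequest w =>
      (set_hreq st (fun j => if j == src then maxn (hreq st j) w else hreq st j), [::])
  | MDone val =>
      (set_done st (fun j u => ((j == src) && (u == val)) || done_from st j u)
         (done_sent st) (decided st), [::])
  | MAbort w => on_abort i src w st
  | MSuggest k3 v3 k2 v2 pk2 w =>
      if (w == view st) && is_primary i w then
        match sug_rcv p src with
        | None =>
            (set_pv st (pv_set_rcv p
               (fun j => if j == src then Some (k3, v3, k2, v2, pk2) else sug_rcv p j)
               (proof_rcv p) (prop_rcv p)), [::])
        | Some _ => (st, [::])
        end
      else (st, [::])
  | MProof k1 v1 pk1 w =>
      if w == view st then
        match proof_rcv p src with
        | None =>
            (set_pv st (pv_set_rcv p (sug_rcv p)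
               (fun j => if j == src then Some (k1, v1, pk1) else proof_rcv p j)
               (prop_rcv p)), [::])
        | Some _ => (st, [::])
        end
      else (st, [::])
  | MPropose key val w =>
      if (w == view st) && is_primary src w then
        match prop_rcv p with
        | None =>
            let md :=
              if (lock st == 0) || (val == lock_val st) then PImm
              else if (key < Posz w)%R && (lock st <= key)%R then PCond
              else PRej in
            (set_pv st (pv_set_rcv p (sug_rcv p) (proof_rcv p)
                          (Some (key, val, md))), [::])
        | Some _ => (st, [::])
        end
      else (st, [::])
  | MPhase ph val w =>
      if w == view st then
        (set_pv st (pv_set_from p
           (fun ph' j u => ((phase_nat ph' == phase_nat ph) && (j == src) && (u == val))
                           || from p ph' j u)
           (fired p)), [::])
      else (st, [::])
  end.

Definition k2proof_ok (st : lstate) (j : party) (K : int) (W : V) : bool :=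
  match sug_rcv (pv st) j with
  | Some (_, _, k, w, pk) =>
      (pk < k)%R && (k < Posz (view st))%R && ((K <= pk)%R || ((K <= k)%R && (w == W)))
  | None => false
  end.

Definition accepted (st : lstate) (j : party) : bool :=
  match sug_rcv (pv st) j with
  | Some (k3, v3, _, _, _) =>
      (k3 == 0) ||
      ((k3 < Posz (view st))%R && (f.+1 <= #|[set j' | k2proof_ok st j' k3 v3]|)%N)
  | None => false
  end.

Definition sug_pair (st : lstate) (j : party) : int * V :=
  match sug_rcv (pv st) j with
  | Some (k3, v3, _, _, _) => (k3, v3)
  | None => (Posz 0, lock_val st) (* unused *)
  end.

Definition proof_ok (st : lstate) (j : party) : bool :=
  match proof_rcv (pv st) j with
  | Some (k, w, pk) =>
      (Posz (view st) > k)%R && (k > pk)%R &&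
      ((lock st <= pk)%R || ((lock st <= k)%R && (w != lock_val st)))
  | None => false
  end.

Definition quorum_update (st : lstate) (ph : phase) (val : V) : lstate :=
  let v := Posz (view st) in
  match ph with
  | PEcho =>
      LState (lock st) (lock_val st) (key3 st) (key3_val st) (key2 st) (key2_val st)
        (prev_key2 st) v val (if key1_val st != val then key1 st else prev_key1 st)
        (view st) (hreq st) (habort st) (done_from st) (done_sent st) (decided st) (pv st)
  | PKey1 =>
      LState (lock st) (lock_val st) (key3 st) (key3_val st) v val
        (if key2_val st != val then key2 st else prev_key2 st)
        (key1 st) (key1_val st) (prev_key1 st)
        (view st) (hreq st) (habort st) (done_from st) (done_sent st) (decided st) (pv st)
  | PKey2 =>
      LState (lock st) (lock_val st) v val (key2 st) (key2_val st)
        (prev_key2 st) (key1 st) (key1_val st) (prev_key1 st)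
        (view st) (hreq st) (habort st) (done_from st) (done_sent st) (decided st) (pv st)
  | PKey3 =>
      LState v val (key3 st) (key3_val st) (key2 st) (key2_val st)
        (prev_key2 st) (key1 st) (key1_val st) (prev_key1 st)
        (view st) (hreq st) (habort st) (done_from st) (done_sent st) (decided st) (pv st)
  | PLock => st
  end.

Definition upd (g : gstate) (i : party) (st : lstate) (out : seq (party * party * msg))
    : gstate :=
  GState (fun j => if j == i then st else loc g j) (net g ++ out).

Inductive label :=
| LDeliver (src dst : party) (m : msg)
| LTimer (i : party)
| LSendJoin (i : party) (k : nat) (j : party)
| LSuggest (i : party)
| LQuorum (i : party) (ph : phase) (val : V)
| LLockDone (i : party) (val : V)
| LDoneRelay (i : party) (val : V)
| LDecide (i : party) (val : V)
| LPropose (i : party) (k : int) (w : V)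
| LEcho (i : party).

Variable F : {set party}.  (* the Byzantine parties *)

(* internal (immediately triggered) actions of nonfaulty party i *)
Inductive istep (g : gstate) : label -> gstate -> Prop :=
| IS_SendJoin i k j m D :
    i \notin F -> decided (loc g i) = None ->
    (k < size (pending (pv (loc g i))))%N ->
    nth (MRequest 0, set0) (pending (pv (loc g i))) k = (m, D) ->
    j \notin D -> hreq (loc g i) j = view (loc g i) ->
    istep g (LSendJoin i k j)
      (upd g i (set_pv (loc g i) (pv_set_pending (pv (loc g i))
                  (set_nth (MRequest 0, set0) (pending (pv (loc g i))) k (m, j |: D))))
           [:: (i, j, m)])
| IS_Suggest i p :
    i \notin F -> decided (loc g i) = None ->
    ~~ sug_sent (pv (loc g i)) ->
    primary (view (loc g i)) = Some p -> hreq (loc g i) p = view (loc g i) ->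
    istep g (LSuggest i)
      (let st := loc g i in let q := pv st in
       upd g i (set_pv st (pv_set_flags q true (timer_fired q) (echo_queued q) (prop_queued q)))
         [:: (i, p, MSuggest (key3 st) (key3_val st) (key2 st) (key2_val st)
                              (prev_key2 st) (view st))])
| IS_Quorum i ph val :
    i \notin F -> decided (loc g i) = None ->
    ph <> PLock -> ~~ fired (pv (loc g i)) ph val ->
    (n - f <= #|[set j | from (pv (loc g i)) ph j val]|)%N ->
    istep g (LQuorum i ph val)
      (let st := loc g i in let q := pv st in
       let q' := pv_set_from q (from q)
                   (fun ph' u => ((phase_nat ph' == phase_nat ph) && (u == val)) || fired q ph' u) in
       upd g i (set_pv (quorum_update st ph val)
                  (pv_queue q' (MPhase (next_phase ph) val (view st)))) [::])
| IS_LockDone i val :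
    i \notin F -> decided (loc g i) = None ->
    ~~ done_sent (loc g i) ->
    (n - f <= #|[set j | from (pv (loc g i)) PLock j val]|)%N ->
    istep g (LLockDone i val)
      (upd g i (set_done (loc g i) (done_from (loc g i)) true None)
         (sendall i (MDone val)))
| IS_DoneRelay i val :
    i \notin F -> decided (loc g i) = None ->
    ~~ done_sent (loc g i) ->
    (f.+1 <= #|[set j | done_from (loc g i) j val]|)%N ->
    istep g (LDoneRelay i val)
      (upd g i (set_done (loc g i) (done_from (loc g i)) true None)
         (sendall i (MDone val)))
| IS_Decide i val :
    i \notin F -> decided (loc g i) = None ->
    (n - f <= #|[set j | done_from (loc g i) j val]|)%N ->
    istep g (LDecide i val)
      (upd g i (set_done (loc g i) (done_from (loc g i)) (done_sent (loc g i)) (Some val))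
         [::])
| IS_Propose i j k w :
    i \notin F -> decided (loc g i) = None ->
    is_primary i (view (loc g i)) -> ~~ prop_queued (pv (loc g i)) ->
    (n - f <= #|[set j' | accepted (loc g i) j']|)%N ->
    accepted (loc g i) j -> sug_pair (loc g i) j = (k, w) ->
    (forall j', accepted (loc g i) j' -> ((sug_pair (loc g i) j').1 <= k)%R) ->
    istep g (LPropose i k w)
      (let st := loc g i in let q := pv st in
       upd g i (set_pv st (pv_queue (pv_set_flags q (sug_sent q) (timer_fired q)
                                        (echo_queued q) true)
                                    (MPropose k w (view st)))) [::])
| IS_Echo i key val md :
    i \notin F -> decided (loc g i) = None ->
    prop_rcv (pv (loc g i)) = Some (key, val, md) ->
    ~~ echo_queued (pv (loc g i)) ->
    (md = PImm \/ (md = PCond /\ (f.+1 <= #|[set j | proof_ok (loc g i) j]|)%N)) ->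
    istep g (LEcho i)
      (let st := loc g i in let q := pv st in
       upd g i (set_pv st (pv_queue (pv_set_flags q (sug_sent q) (timer_fired q)
                                        true (prop_queued q))
                                    (MPhase PEcho val (view st)))) [::]).

Definition label_party (l : label) : party :=
  match l with
  | LDeliver _ dst _ => dst
  | LTimer i | LSendJoin i _ _ | LSuggest i | LQuorum i _ _ | LLockDone i _
  | LDoneRelay i _ | LDecide i _ | LPropose i _ _ | LEcho i => i
  end.

(* party i has no pending immediate action ("as soon as" / "upon" rules are
   executed before party i handles any further external event) *)
Definition quiescent (g : gstate) (i : party) : Prop :=
  forall l g', istep g l g' -> label_party l <> i.

Inductive step (g : gstate) : label -> gstate -> Prop :=
| S_Internal l g' : istep g l g' -> step g l g'
| S_Deliver src i m :
    i \notin F -> decided (loc g i) = None -> quiescent g i ->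
    (* authenticated channels: a message from a nonfaulty sender must have
       been sent by it; a Byzantine sender may send anything *)
    (src \in F \/ List.In (src, i, m) (net g)) ->
    step g (LDeliver src i m)
      (let r := on_msg i src m (loc g i) in upd g i r.1 r.2)
| S_Timer i :
    i \notin F -> decided (loc g i) = None -> quiescent g i ->
    ~~ timer_fired (pv (loc g i)) ->
    step g (LTimer i)
      (let st := loc g i in let q := pv st in
       upd g i (set_pv st (pv_set_flags q (sug_sent q) true (echo_queued q) (prop_queued q)))
         (sendall i (MAbort (view st)))).

Fixpoint valid_exec (g : gstate) (tr : seq (label * gstate)) : Prop :=
  match tr with
  | [::] => True
  | (l, g') :: tr' => step g l g' /\ valid_exec g' tr'
  end.

Definition final_state (g0 : gstate) (tr : seq (label * gstate)) : gstate :=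
  last g0 (map snd tr).

(* in the execution tr from g0, nonfaulty party i sets key3 := view and
   key3_val := val (upon <key2,val,v> from n-f parties) while in view v *)
Definition sets_key3 (g0 : gstate) (tr : seq (label * gstate)) (i : party)
    (v : nat) (val : V) : Prop :=
  exists tr1 tr2 g',
    tr = tr1 ++ (LQuorum i PKey2 val, g') :: tr2 /\
    view (loc (final_state g0 tr1) i) = v.

End ITHS.

(* A nonfaulty party announces <key2,val,u> only in its current view u, at the
   moment it sets key2 := u and key2_val := val.  From then on key2 never
   decreases, and whenever key2_val changes the old key2 is saved in prev_key2,
   so the triple (key2, key2_val, prev_key2) keeps supporting (u, val); every
   suggest it sends in a later view is built from that triple.  The n - f
   key2 messages that made i set key3 include at least n - 2f >= f + 1 from
   nonfaulty parties, and authenticated channels guarantee they really sent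
   them. *)

From HB Require Import structures.
From mathcomp Require Import all_boot all_order all_algebra.
From mathcomp Require Import zify.
From Stdlib Require List.
Set Implicit Arguments. Unset Strict Implicit. Unset Printing Implicit Defensive.
Import Order.TTheory GRing.Theory Num.Theory.

Section ListIn.
Variable T : Type.
Implicit Types (x y z : T) (s : seq T).

Lemma In_rcons x y s : List.In x (rcons s y) -> x = y \/ List.In x s.
Proof. by rewrite -(cats1 s y) => /(List.in_app_or s) [|[<-|[]]]; tauto. Qed.

Lemma In_nth (x0 : T) s k : (k < size s)%N -> List.In (nth x0 s k) s.
Proof. by elim: s k => [|y s IH] [|k] //= Hk; [left | right; apply: IH]. Qed.

Lemma In_set_nth (x0 : T) x z s k :
  (k < size s)%N -> List.In x (set_nth x0 s k z) -> x = z \/ List.In x s.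
Proof.
elim: s k => [|y s IH] [|k] //= Hk [<-|Hx].
- by left.
- by right; right.
- by right; left.
- by case: (IH k Hk Hx) => [|H]; [left | right; right].
Qed.

Lemma In_flatten (ss : seq (seq T)) x :
  List.In x (flatten ss) -> exists2 s, List.In s ss & List.In x s.
Proof.
elim: ss => [|s ss IH] //= /(List.in_app_or s) [Hx|/IH [s' Hs' Hx]].
  by exists s; [left|].
by exists s'; [right|].
Qed.

End ListIn.

Lemma In_sendall (V : eqType) n (i : party n) (m : msg V) e :
  List.In e (sendall i m) -> e.1.1 = i /\ e.2 = m.
Proof. by case/List.in_map_iff => j [<-]. Qed.

Lemma phase_nat_inj : injective phase_nat.
Proof. by case; case. Qed.

Lemma supports_refl (V : eqType) (k pk : int) (val : V) : supports k val pk k val.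
Proof. by rewrite /supports lexx eqxx orbT. Qed.

Lemma supports_overwrite (V : eqType) (k2 pk2 k u : int) (v2 val w : V) :
  (pk2 <= k2)%R -> (u <= k)%R -> supports k2 v2 pk2 u w ->
  supports k val (if v2 != val then k2 else pk2) u w.
Proof.
rewrite /supports => Hpk Huk Hold.
have [_|Hw] := eqVneq w val; first by rewrite Huk orbT.
rewrite andbF orbF; have [Ev|_] /= := eqVneq v2 val; case/orP: Hold => //.
- by case/andP=> _ /eqP Ew; rewrite Ew Ev eqxx in Hw.
- by move=> H; apply: le_trans H Hpk.
- by case/andP.
Qed.

Section Invariant.
Variables (V : eqType) (n f : nat) (F : {set party n}).
Local Notation msgs := (seq (party n * party n * msg V)).
Implicit Types (st : lstate V n) (N out : msgs) (g : gstate V n).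

Definition is_suggest (m : msg V) : bool :=
  if m is MSuggest _ _ _ _ _ _ then true else false.

Definition is_key2 (m : msg V) : bool :=
  if m is MPhase PKey2 _ _ then true else false.

Definition inert (m : msg V) : bool := ~~ is_suggest m && ~~ is_key2 m.

Definition key2_state st : int * V * int := (key2 st, key2_val st, prev_key2 st).

(* A queued send-upon-join message counts as announced: key2 is updated when
   it is queued, not when it is delivered. *)
Definition announces_key2 N st (j : party n) (u : nat) (val : V) : Prop :=
  (exists d, List.In (j, d, MPhase PKey2 val u) N) \/
  (exists D, List.In (MPhase PKey2 val u, D) (pending (pv st))).

Record party_inv st N (j : party n) : Prop := PartyInv {
  key2_le_view : (key2 st <= Posz (view st))%R;
  prev_key2_le_key2 : (prev_key2 st <= key2 st)%R;
  key2_supports_announced : forall u val, announces_key2 N st j u val ->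
    (u <= view st)%N /\ supports (key2 st) (key2_val st) (prev_key2 st) (Posz u) val;
  suggest_supports_announced : forall dst k3 v3 k2 v2 pk2 w,
    List.In (j, dst, MSuggest k3 v3 k2 v2 pk2 w) N ->
    (w <= view st)%N /\ forall u val, announces_key2 N st j u val -> (u < w)%N ->
                        supports k2 v2 pk2 (Posz u) val;
  pending_not_suggest : forall m D, List.In (m, D) (pending (pv st)) -> ~~ is_suggest m;
  from_was_sent : forall ph k val, from (pv st) ph k val -> k \notin F ->
    List.In (k, j, MPhase ph val (view st)) N
}.

Lemma party_inv_other st N out j :
  party_inv st N j -> (forall e, List.In e out -> e.1.1 <> j) ->
  party_inv st (N ++ out) j.
Proof.
move=> [Hk Hpk Hann Hsug Hpend Hfrom] Hout.
have old u val : announces_key2 (N ++ out) st j u val -> announces_key2 N st j u val.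
  by case=> [[d /(List.in_app_or N) [H|/Hout //]]|H]; [left; exists d | right].
split=> //.
- by move=> u val /old /Hann.
- move=> dst k3 v3 k2 v2 pk2 w /(List.in_app_or N) [/Hsug [Hw Hs]|/Hout //].
  by split=> // u val /old; apply: Hs.
- by move=> ph k val Hf Hk'; apply: List.in_or_app; left; apply: Hfrom.
Qed.

Lemma party_inv_mono st st' N out j :
  party_inv st N j -> key2_state st' = key2_state st -> (view st <= view st')%N ->
  (forall u val, announces_key2 (N ++ out) st' j u val -> announces_key2 N st j u val) ->
  (forall d k3 v3 k2 v2 pk2 w, List.In (j, d, MSuggest k3 v3 k2 v2 pk2 w) out ->
     (w <= view st')%N /\ forall u val, announces_key2 N st j u val -> (u < w)%N ->
                         supports k2 v2 pk2 (Posz u) val) ->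
  (forall m D, List.In (m, D) (pending (pv st')) -> ~~ is_suggest m) ->
  (forall ph k val, from (pv st') ph k val -> k \notin F ->
     List.In (k, j, MPhase ph val (view st')) (N ++ out)) ->
  party_inv st' (N ++ out) j.
Proof.
move=> [Hk Hpk Hann Hsug _ _] [Ek Ekv Epk] Hv old Hnew Hpend Hfrom.
split; rewrite ?Ek ?Ekv ?Epk //.
- by apply: le_trans Hk _; rewrite lez_nat.
- by move=> u val /old /Hann [Hu Hs]; split=> //; apply: leq_trans Hv.
- move=> dst k3 v3 k2 v2 pk2 w /(List.in_app_or N) [/Hsug [Hw Hs]|/Hnew [Hw Hs]].
    by split=> [|u val /old]; [apply: leq_trans Hv | apply: Hs].
  by split=> // u val /old; apply: Hs.
Qed.

Definition inert_update st st' out : Prop :=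
  [/\ key2_state st' = key2_state st, (view st <= view st')%N,
      forall ph k val, from (pv st') ph k val -> from (pv st) ph k val /\ view st' = view st,
      forall m D, List.In (m, D) (pending (pv st')) ->
        List.In (m, D) (pending (pv st)) \/ inert m
    & forall e, List.In e out -> inert e.2].

Lemma party_inv_inert st st' N out j :
  party_inv st N j -> inert_update st st' out -> party_inv st' (N ++ out) j.
Proof.
move=> HP [Ek2 Hv Hfrom Hpend Hout]; apply: (party_inv_mono HP Ek2 Hv) => //.
- move=> u val [[d /(List.in_app_or N) [H|/Hout //]]|[D /Hpend [H|//]]].
    by left; exists d.
  by right; exists D.
- by move=> d k3 v3 k2 v2 pk2 w /Hout.
- by move=> m D /Hpend [/(pending_not_suggest HP) | /andP []].
- move=> ph k val /Hfrom [Hf ->] Hk; apply: List.in_or_app; left.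
  exact: from_was_sent HP _ _ _ Hf Hk.
Qed.

Lemma In_queue_inert (p : pview V n) m0 m D :
  inert m0 -> List.In (m, D) (pending (pv_queue p m0)) ->
  List.In (m, D) (pending p) \/ inert m.
Proof. by move=> Hm0 H; case: (In_rcons H) => [[-> _]|]; [right | left]. Qed.

Lemma party_inv_key1_quorum st N j val fi :
  party_inv st N j ->
  party_inv (set_pv (quorum_update st PKey1 val)
               (pv_queue (pv_set_from (pv st) (from (pv st)) fi)
                  (MPhase PKey2 val (view st)))) N j.
Proof.
move=> HP; set st' := set_pv _ _.
have ann u w : announces_key2 N st' j u w ->
    announces_key2 N st j u w \/ (u = view st /\ w = val).
  case=> [[d H]|[D H]]; first by left; left; exists d.
  by case: (In_rcons H) => [[-> -> _]|H']; [right | left; right; exists D].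
have Hk := key2_le_view HP; have Hpk := prev_key2_le_key2 HP.
split=> /=.
- exact: lexx.
- by case: ifP => _ //; apply: le_trans Hpk Hk.
- move=> u w /ann [/(key2_supports_announced HP) [Hu Hs]|[-> ->]].
    by split=> //; apply: supports_overwrite Hpk _ Hs; rewrite lez_nat.
  by split; [|apply: supports_refl].
- move=> dst k3 v3 k2 v2 pk2 w /(suggest_supports_announced HP) [Hw Hs].
  split=> // u w' /ann [Hann|[-> _] Hu]; first exact: Hs.
  by move: (leq_trans Hu Hw); rewrite ltnn.
- move=> m D H; case: (In_rcons H) => [[-> _]|H'] //.
  exact: pending_not_suggest HP _ _ H'.
- exact: from_was_sent HP.
Qed.

Lemma party_inv_send_join st N j k dst m D :
  party_inv st N j -> (k < size (pending (pv st)))%N ->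
  nth (MRequest V 0, set0) (pending (pv st)) k = (m, D) ->
  party_inv (set_pv st (pv_set_pending (pv st)
               (set_nth (MRequest V 0, set0) (pending (pv st)) k (m, dst |: D))))
    (N ++ [:: (j, dst, m)]) j.
Proof.
move=> HP Hk Hnth.
have HmD : List.In (m, D) (pending (pv st)) by rewrite -Hnth; apply: In_nth.
apply: (party_inv_mono HP) => //=.
- move=> u val [[d /(List.in_app_or N) [H|[E|//]]]|[D' /(In_set_nth Hk) [E|H]]].
  + by left; exists d.
  + by case: E => _ Em; right; exists D; rewrite -Em.
  + by case: E => Em _; right; exists D; rewrite Em.
  + by right; exists D'.
- move=> d k3 v3 k2 v2 pk2 w [E|//]; case: E => _ Em.
  by move: (pending_not_suggest HP HmD); rewrite Em.
- move=> m' D' /(In_set_nth Hk) [[-> _]|H].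
    exact: pending_not_suggest HP _ _ HmD.
  exact: pending_not_suggest HP _ _ H.
- move=> ph k' val Hf Hk'; apply: List.in_or_app; left.
  exact: from_was_sent HP _ _ _ Hf Hk'.
Qed.

Lemma party_inv_suggest st N j p :
  party_inv st N j ->
  party_inv (set_pv st (pv_set_flags (pv st) true (timer_fired (pv st))
                          (echo_queued (pv st)) (prop_queued (pv st))))
    (N ++ [:: (j, p, MSuggest (key3 st) (key3_val st) (key2 st) (key2_val st)
                                (prev_key2 st) (view st))]) j.
Proof.
move=> HP; apply: (party_inv_mono HP) => //=.
- move=> u val [[d /(List.in_app_or N) [H|[//|//]]]|H]; [by left; exists d | by right].
- move=> d k3 v3 k2 v2 pk2 w [E|//]; case: E => _ _ _ <- <- <- <-.
  by split=> // u val /(key2_supports_announced HP) [].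
- exact: pending_not_suggest HP.
- move=> ph k val Hf Hk; apply: List.in_or_app; left.
  exact: from_was_sent HP _ _ _ Hf Hk.
Qed.

Lemma on_abort_inert st i src w :
  inert_update st (on_abort f i src w st).1 (on_abort f i src w st).2.
Proof.
rewrite /on_abort; case: ifP => _ /=; last by split=> // m D; left.
set out1 := if _ then sendall _ _ else [::].
have out1_inert e : List.In e out1 -> inert e.2.
  by rewrite /out1; case: ifP => _ // /In_sendall [_ ->].
case: ifP => Hv /=; split=> //.
- exact: leqW.
- by move=> m D /= [[<- _]|]; right.
- by move=> e /(List.in_app_or out1) [/out1_inert|/In_sendall [_ ->]].
- by move=> m D H; left.
Qed.

Lemma on_abort_sender st i src w e :
  List.In e (on_abort f i src w st).2 -> e.1.1 = i.
Proof.
rewrite /on_abort; case: ifP => //= _.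
set out1 := if _ then sendall _ _ else [::].
have out1_sender e' : List.In e' out1 -> e'.1.1 = i.
  by rewrite /out1; case: ifP => _ // /In_sendall [].
case: ifP => _ /=; last exact: out1_sender.
by case/(List.in_app_or out1) => [/out1_sender|/In_sendall []].
Qed.

Lemma on_msg_sender st i src m e : List.In e (on_msg f i src m st).2 -> e.1.1 = i.
Proof.
case: m => //= [w|k3 v3 k2 v2 pk2 w|k1 v1 pk1 w|key val w|ph val w].
- exact: on_abort_sender.
- by case: ifP => _ //; case: (sug_rcv _ _).
- by case: ifP => _ //; case: (proof_rcv _ _).
- by case: ifP => _ //; case: (prop_rcv _).
- by case: ifP.
Qed.

Lemma party_inv_on_msg st N i src m :
  party_inv st N i -> (src \in F \/ List.In (src, i, m) N) ->
  party_inv (on_msg f i src m st).1 (N ++ (on_msg f i src m st).2) i.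
Proof.
move=> HP Hsent.
case: m Hsent => [w|val|w|k3 v3 k2 v2 pk2 w|k1 v1 pk1 w|key val w|ph val w] Hsent /=.
1,2: by apply: (party_inv_inert HP); split=> // m D; left.
- exact: party_inv_inert HP (on_abort_inert _ _ _ _).
- by case: ifP => _; [case: (sug_rcv _ _) => [?|]|];
    apply: (party_inv_inert HP); split=> // m D; left.
- by case: ifP => _; [case: (proof_rcv _ _) => [?|]|];
    apply: (party_inv_inert HP); split=> // m D; left.
- by case: ifP => _; [case: (prop_rcv _) => [?|]|];
    apply: (party_inv_inert HP); split=> // m D; left.
case: ifP => [/eqP Hw|_]; last by apply: (party_inv_inert HP); split=> // m D; left.
apply: (party_inv_mono HP) => //=.
- by move=> u v' [[d /(List.in_app_or N) [H|[]]]|H]; [left; exists d | right].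
- exact: pending_not_suggest HP.
move=> ph' k v' /orP [/andP [/andP [/eqP Eph /eqP ->] /eqP ->]|Hf] Hk;
  apply: List.in_or_app; left; last exact: from_was_sent HP _ _ _ Hf Hk.
rewrite (phase_nat_inj Eph).
by rewrite -Hw; case: Hsent => // HF; rewrite HF in Hk.
Qed.

Definition honest_inv g : Prop :=
  forall j, j \notin F -> party_inv (loc g j) (net g) j.

Lemma honest_inv_upd g i st' out :
  honest_inv g -> (forall e, List.In e out -> e.1.1 = i) ->
  party_inv st' (net g ++ out) i -> honest_inv (upd g i st' out).
Proof.
move=> HI Hout HP j Hj /=; case: eqP => [->|Hne] //.
by apply: party_inv_other (HI j Hj) _ => e /Hout ->; apply: nesym.
Qed.

Lemma honest_inv_istep g l g' : honest_inv g -> istep f F g l g' -> honest_inv g'.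
Proof.
move=> HI; case=> [i k j m D Hi _ Hk Hnth _ _ | i p Hi _ _ _ _ | i ph val Hi _ Hph _ _
  | i val Hi _ _ _ | i val Hi _ _ _ | i val Hi _ _ | i j k w Hi _ _ _ _ _ _ _
  | i key val md Hi _ _ _ _]; have HP := HI i Hi; apply: (honest_inv_upd HI).
- by move=> e [<-|].
- exact: party_inv_send_join.
- by move=> e [<-|].
- exact: party_inv_suggest.
- by [].
- case: ph Hph => // _;
    try by apply: (party_inv_inert HP); split=> // m D; apply: In_queue_inert.
  by rewrite cats0; apply: party_inv_key1_quorum.
- by move=> e /In_sendall [].
- by apply: (party_inv_inert HP); split=> // [m D|e /In_sendall [_ ->]]; [left|].
- by move=> e /In_sendall [].
- by apply: (party_inv_inert HP); split=> // [m D|e /In_sendall [_ ->]]; [left|].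
- by [].
- by apply: (party_inv_inert HP); split=> // m D; left.
- by [].
- by apply: (party_inv_inert HP); split=> // m D; apply: In_queue_inert.
- by [].
- by apply: (party_inv_inert HP); split=> // m D; apply: In_queue_inert.
Qed.

Lemma honest_inv_step g l g' : honest_inv g -> step f F g l g' -> honest_inv g'.
Proof.
move=> HI; case=> [l0 g0 /(honest_inv_istep HI) // | src i m Hi _ _ Hsent | i Hi _ _ _];
  apply: (honest_inv_upd HI).
- exact: on_msg_sender.
- exact: party_inv_on_msg (HI i Hi) Hsent.
- by move=> e /In_sendall [].
- by apply: (party_inv_inert (HI i Hi)); split=> // [m D|e /In_sendall [_ ->]]; [left|].
Qed.

Lemma net_step_mono g l g' e :
  step f F g l g' -> List.In e (net g) -> List.In e (net g').
Proof. by case=> [l0 g0 []||] * /=; apply: List.in_or_app; left. Qed.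

Lemma valid_exec_cat g tr1 tr2 :
  valid_exec f F g (tr1 ++ tr2) ->
  valid_exec f F g tr1 /\ valid_exec f F (final_state g tr1) tr2.
Proof.
elim: tr1 g => [|[l g1] tr IH] g /=; first by split.
by case=> Hs /IH [].
Qed.

Lemma final_state_cat g tr1 tr2 :
  final_state g (tr1 ++ tr2) = final_state (final_state g tr1) tr2.
Proof. by rewrite /final_state map_cat last_cat. Qed.

Lemma honest_inv_exec g tr :
  valid_exec f F g tr -> honest_inv g -> honest_inv (final_state g tr).
Proof.
elim: tr g => [|[l g1] tr IH] g //= [Hs Htr] HI.
exact: IH Htr (honest_inv_step HI Hs).
Qed.

Lemma net_exec_mono g tr e :
  valid_exec f F g tr -> List.In e (net g) -> List.In e (net (final_state g tr)).
Proof.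
elim: tr g => [|[l g1] tr IH] g //= [Hs Htr] He.
exact: IH Htr (net_step_mono Hs He).
Qed.

Lemma honest_inv_init (x : party n -> V) : honest_inv (init x F).
Proof.
have only_requests e : List.In e (net (init x F)) -> e.2 = MRequest V 0.
  move=> /= H; case: (In_flatten H) => s /(List.in_map_iff _ _ s) [j [<- _]].
  by case/In_sendall.
move=> j Hj; split=> //=.
- by move=> u val [[d /only_requests]|[D [[]|]]].
- by move=> dst k3 v3 k2 v2 pk2 w /only_requests.
- by move=> m D [[<- _]|].
Qed.

Lemma quorum_step_card g i ph val g' :
  step f F g (LQuorum i ph val) g' ->
  (n - f <= #|[set j | from (pv (loc g i)) ph j val]|)%N.
Proof. by move=> Hs; inversion Hs as [l0 g0 Hi| |]; inversion Hi. Qed.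

Lemma suggest_supports_key2 g j d dst u val k3 v3 k2 v2 pk2 w :
  honest_inv g -> j \notin F ->
  List.In (j, d, MPhase PKey2 val u) (net g) ->
  List.In (j, dst, MSuggest k3 v3 k2 v2 pk2 w) (net g) ->
  (u < w)%N -> supports k2 v2 pk2 (Posz u) val.
Proof.
move=> HI Hj Hkey2 /(suggest_supports_announced (HI j Hj)) [_ Hs].
by apply: Hs; left; exists d.
Qed.

End Invariant.

Lemma card_quorum_honest (T : finType) (P B : {set T}) (m f : nat) :
  (3 * f < m)%N -> (#|B| <= f)%N -> (m - f <= #|P|)%N -> (f.+1 <= #|P :\: B|)%N.
Proof.
move=> Hm HB HP; rewrite cardsD.
have := subset_leq_card (subsetIr P B); lia.
Qed.

Theorem lemma2p9 (V : eqType) (n f : nat) (x : 'I_n -> V) (F : {set 'I_n})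
    (tr : seq (label V n * gstate V n))
    (hn : (3 * f < n)%N) (hF : (#|F| <= f)%N)
    (hexec : valid_exec f F (init x F) tr)
    (i : 'I_n) (v : nat) (val : V)
    (hi : i \notin F)
    (hset : sets_key3 (init x F) tr i v val) :
  exists S : {set 'I_n},
    #|S| = f.+1 /\ [disjoint S & F] /\
    forall j, j \in S ->
    forall (dst : 'I_n) (k3 : int) (v3 : V) (k2 : int) (v2 : V) (pk2 : int) (w : nat),
      List.In (j, dst, MSuggest k3 v3 k2 v2 pk2 w) (net (final_state (init x F) tr)) ->
      (v < w)%N ->
      supports k2 v2 pk2 (Posz v) val.
Proof.
case: hset => tr1 [tr2 [g' [Etr Hview]]]; subst tr.
case/valid_exec_cat: hexec => Hpre [Hstep Hpost].
set gpre := final_state (init x F) tr1 in Hview Hstep Hpost *.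
have HIpre : honest_inv F gpre := honest_inv_exec Hpre (honest_inv_init x).
have HIfin := honest_inv_exec Hpost (honest_inv_step HIpre Hstep).
set Q := [set j | from (pv (loc gpre i)) PKey2 j val].
have /card_geqP [s [Us Hsize HsQ]] : (f.+1 <= #|Q :\: F|)%N.
  exact: card_quorum_honest hn hF (quorum_step_card Hstep).
have honest_sender j :
    j \in s -> j \notin F /\ from (pv (loc gpre i)) PKey2 j val.
  by move/HsQ; rewrite !inE => /andP [].
exists [set j in s]; split; first by rewrite cardsE (card_uniqP Us).
split.
  by rewrite disjoints_subset; apply/subsetP => j; rewrite !inE => /honest_sender [].
move=> j; rewrite inE => /honest_sender [Hj HQj] dst k3 v3 k2 v2 pk2 w.
rewrite final_state_cat /= => Hsug Hvw.
apply: (suggest_supports_key2 HIfin Hj _ Hsug Hvw).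
apply: net_exec_mono Hpost _; apply: net_step_mono Hstep _.
by rewrite -Hview; apply: from_was_sent (HIpre i hi) _ _ _ HQj Hj.
Qed.
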